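(* In the coefficient-choosing game of degree $d = 3$ over $R = \mathbb{Z}/16\mathbb{Z}$, Wanda has a winning strategy irrespective of whether she is the first or the second player.
   Context: The coefficient-choosing game of degree $d$ over $R$: Nora and Wanda alternately choose coefficients of $f(x) = a_d x^d + \cdots + a_0$; on each move the current player picks a not-yet-chosen coefficient and assigns it a value in $R$, subject to $a_d \neq 0$, $a_0 \neq 0$. After all $d+1$ coefficients are chosen, Wanda wins if $f$ has a root in $R$, and Nora wins otherwise. *)

From mathcomp Require Import all_boot all_algebra.
Set Implicit Arguments. Unset Strict Implicit. Unset Printing Implicit Defensive.
Import GRing.Theory.
Local Open Scope ring_scope.

(* Coefficient-choosing game of degree d over a ring R.
   A position records, for each index i in {0,...,d}, either None
   (coefficient a_i not yet chosen) or Some v (a_i = v). *)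
Definition position (R : Type) (d : nat) := 'I_d.+1 -> option R.

Definition empty_pos (R : Type) (d : nat) : position R d := fun _ => None.

Definition legal_move (R : nzRingType) (d : nat) (p : position R d)
    (i : 'I_d.+1) (v : R) : Prop :=
  p i = None /\ ((val i = 0)%N \/ (val i = d) -> v <> 0).

Definition play (R : Type) (d : nat) (p : position R d)
    (i : 'I_d.+1) (v : R) : position R d :=
  fun j => if j == i then Some v else p j.

Definition pos_poly (R : nzRingType) (d : nat) (p : position R d) : {poly R} :=
  \poly_(i < d.+1) odflt 0 (p (inord i)).

Definition wanda_wins_final (R : nzRingType) (d : nat) (p : position R d) : Prop :=
  exists x : R, root (pos_poly p) x.

(* wanda_can_win k w p : with k moves remaining from position p,
   where w = true iff it is Wanda's turn, Wanda has a strategy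
   guaranteeing that the final polynomial has a root in R. *)
Fixpoint wanda_can_win (R : nzRingType) (d : nat) (k : nat) (w : bool)
    (p : position R d) : Prop :=
  match k with
  | 0 => wanda_wins_final p
  | k'.+1 =>
      if w then exists i v, legal_move p i v /\ @wanda_can_win R d k' false (play p i v)
      else forall i v, legal_move p i v -> @wanda_can_win R d k' true (play p i v)
  end.

Definition wanda_wins_as_first (R : nzRingType) (d : nat) : Prop :=
  @wanda_can_win R d d.+1 true (@empty_pos R d).
Definition wanda_wins_as_second (R : nzRingType) (d : nat) : Prop :=
  @wanda_can_win R d d.+1 false (@empty_pos R d).

From mathcomp Require Import all_boot all_algebra.
Set Implicit Arguments.
Unset Strict Implicit.
Unset Printing Implicit Defensive.
Local Open Scope ring_scope.

(* Over a finite ring the game is finite, so the winner is found by walking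
   the game tree.  [wanda_can_win] is reflected by a boolean search over
   explicit enumerations of the coefficient indices and of the ring, and for
   R = Z/16Z, d = 3 that search is run by [vm_compute]. *)

(* [ord_enum] is built with [insub], which [vm_compute] cannot reduce (its
   [idP] is opaque); [inZp] computes. *)
Definition ord_seq n : seq 'I_n.+1 := [seq inZp i | i <- iota 0 n.+1].

Lemma mem_ord_seq n (i : 'I_n.+1) : i \in ord_seq n.
Proof.
apply/mapP; exists (val i); first by rewrite mem_iota ltn_ord.
by apply: val_inj; rewrite /= modn_small.
Qed.

(* [vm_compute] is call-by-value, so [a || b] and [a && b] evaluate [b]
   regardless of [a].  These versions, like the [if]s in [wanda_can_winb],
   short-circuit, which is what lets the search prune. *)
Fixpoint has_lazy T (a : pred T) (s : seq T) : bool :=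
  if s is x :: s' then (if a x then true else has_lazy a s') else false.

Fixpoint all_lazy T (a : pred T) (s : seq T) : bool :=
  if s is x :: s' then (if a x then all_lazy a s' else false) else true.

Lemma has_lazyP (T : eqType) (a : pred T) (s : seq T) :
  reflect (exists2 x, x \in s & a x) (has_lazy a s).
Proof.
suff -> : has_lazy a s = has a s by apply: hasP.
by elim: s => //= x s ->; case: (a x).
Qed.

Lemma all_lazyP (T : eqType) (a : pred T) (s : seq T) :
  reflect {in s, forall x, a x} (all_lazy a s).
Proof.
suff -> : all_lazy a s = all a s by apply: allP.
by elim: s => //= x s ->; case: (a x).
Qed.

Section GameSearch.

Variables (R : nzRingType) (d : nat) (rs : seq R).
Hypothesis mem_rs : forall v : R, v \in rs.

Definition legal_moveb (p : position R d) (i : 'I_d.+1) (v : R) : bool :=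
  (p i == None) && (((val i == 0) || (val i == d))%N ==> (v != 0)).

Lemma legal_moveP p i v : reflect (legal_move p i v) (legal_moveb p i v).
Proof.
apply: (iffP andP) => [[/eqP none_i /implyP nz_v] | [none_i nz_v]]; split=> //.
- by move=> end_i; apply/eqP/nz_v/orP; case: end_i => ->; [left | right].
- exact/eqP.
- by apply/implyP => /orP end_i; apply/eqP/nz_v; case: end_i => /eqP; [left | right].
Qed.

Definition pos_coefs (p : position R d) : seq R :=
  mkseq (fun i => odflt 0 (p (inZp i))) d.+1.

Lemma pos_polyE p : pos_poly p = Poly (pos_coefs p).
Proof.
apply/polyP=> j; rewrite coef_poly coef_Poly.
case: ltnP => [lt_jd | le_dj]; last by rewrite nth_default ?size_mkseq.
rewrite nth_mkseq //; congr (odflt 0 (p _)).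
by apply: val_inj; rewrite /= inordK // modn_small.
Qed.

Definition wanda_wins_finalb (p : position R d) : bool :=
  has_lazy (fun x => horner_rec (pos_coefs p) x == 0) rs.

Lemma wanda_wins_finalP p : reflect (wanda_wins_final p) (wanda_wins_finalb p).
Proof.
rewrite /wanda_wins_final pos_polyE; apply: (iffP idP).
  by case/has_lazyP=> x _ root_x; exists x; rewrite /root horner_Poly.
by case=> x; rewrite /root horner_Poly => root_x; apply/has_lazyP; exists x.
Qed.

Fixpoint wanda_can_winb (k : nat) (w : bool) (p : position R d) : bool :=
  match k with
  | 0 => wanda_wins_finalb p
  | k'.+1 =>
      if w then
        has_lazy (fun i => has_lazy (fun v =>
          if legal_moveb p i v then wanda_can_winb k' false (play p i v) else false) rs)
        (ord_seq d)
      else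
        all_lazy (fun i => all_lazy (fun v =>
          if legal_moveb p i v then wanda_can_winb k' true (play p i v) else true) rs)
        (ord_seq d)
  end.

Lemma wanda_can_winP k w p : reflect (wanda_can_win k w p) (wanda_can_winb k w p).
Proof.
elim: k w p => [|k IH] w p; first exact: wanda_wins_finalP.
case: w; apply: (iffP idP).
- case/has_lazyP=> i _ /has_lazyP[v _].
  by case: legal_moveP => // legal /IH win; exists i, v.
- case=> i [v [legal /IH win]]; apply/has_lazyP; exists i; first exact: mem_ord_seq.
  by apply/has_lazyP; exists v => //; case: legal_moveP.
- move=> /all_lazyP all_i i v legal; apply/IH.
  move/all_lazyP: (all_i i (mem_ord_seq i)) => /(_ v (mem_rs v)).
  by case: legal_moveP.
- move=> win; apply/all_lazyP => i _; apply/all_lazyP => v _.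
  by case: legal_moveP => // /win /IH.
Qed.

End GameSearch.

Theorem lemma9 :
  wanda_wins_as_first 'Z_16 3 /\ wanda_wins_as_second 'Z_16 3.
Proof.
(* ['Z_16] is ['I_16] up to conversion, so [ord_seq 15] enumerates it. *)
by split; apply/(wanda_can_winP (@mem_ord_seq 15)); vm_compute.
Qed.
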